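(* Let $\mathcal M$ be a first-order structure equipped with a dimension satisfying axioms A1–A2. Let $(X_a)_{a\in A}$ be a uniformly definable family of sets indexed by a definable set $A$, with $X_a=X_{a'}$ if and only if $a=a'$. Let $U=\bigcup_{a\in A}X_a$ and, for $0\leq r\leq\dim(A)$, let $U_r=\{x\in U: \dim(\{a\in A: x\in X_a\})=r\}$ and $[X_a]_r=X_a\cap U_r$. Suppose that for some such $r$, $[X_a]_r$ is nonempty and $\dim([X_a]_r)$ does not depend on $a\in A$. Then $\dim(U_r)+r=\dim(A)+\dim([X_a]_r)$.
   Context: The dimension assigns to each nonempty definable set a natural number such that: (A1) if $f:B\to C$ is definable between nonempty definable sets, then $\{c\in C:\dim(f^{-1}(c))=m\}$ is definable for every $m$; (A2) if $f:B\to C$ is definable and all its fibers have dimension $m$, then $\dim B=\dim f(B)+m$. (By A1 the sets $U_r$ and $[X_a]_r$ are definable.) *)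

From HB Require Import structures.
From mathcomp Require Import all_boot.
From mathcomp Require Import boolp classical_sets.
Set Implicit Arguments. Unset Strict Implicit. Unset Printing Implicit Defensive.
Local Open Scope classical_set_scope.

Definition coord_map (M : Type) (n m : nat) (s : 'I_m -> 'I_n)
  (x : n.-tuple M) : m.-tuple M := [tuple tnth x (s i) | i < m].

Definition graph_on (M : Type) (n m : nat) (B : set (n.-tuple M))
  (f : n.-tuple M -> m.-tuple M) : set ((n + m).-tuple M) :=
  [set t | exists2 b, B b & t = cat_tuple b (f b)].

(* A first-order structure with universe M, presented through its family of
   definable sets (with parameters) Def n ⊆ P(M^n), given by the standard
   closure properties, together with a dimension satisfying A1 and A2. *)
Unset Implicit Arguments.
Record dimStructure (M : Type) := DimStructure {
  Def : forall n, set (n.-tuple M) -> Prop;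
  Def_setT : forall n, Def n setT;
  Def_setC : forall n (A : set (n.-tuple M)), Def n A -> Def n (~` A);
  Def_setU : forall n (A B : set (n.-tuple M)), Def n A -> Def n B -> Def n (A `|` B);
  Def_diag : Def 2 [set x | tnth x ord0 = tnth x ord_max];
  Def_point : forall c : M, Def 1 [set x | tnth x ord0 = c];
  Def_preim : forall n m (s : 'I_m -> 'I_n) (A : set (m.-tuple M)),
      Def m A -> Def n (coord_map s @^-1` A);
  Def_image : forall n m (s : 'I_m -> 'I_n) (A : set (n.-tuple M)),
      Def n A -> Def m (coord_map s @` A);
  dim : forall n, set (n.-tuple M) -> nat;
  dim_A1 : forall n m (B : set (n.-tuple M)) (C : set (m.-tuple M))
      (f : n.-tuple M -> m.-tuple M) (k : nat),
      Def n B -> Def m C -> B !=set0 -> C !=set0 ->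
      (forall b, B b -> C (f b)) -> Def (n + m) (graph_on B f) ->
      Def m [set c | C c /\ (f @` B) c /\ dim n (B `&` f @^-1` [set c]) = k];
  dim_A2 : forall n m (B : set (n.-tuple M)) (C : set (m.-tuple M))
      (f : n.-tuple M -> m.-tuple M) (k : nat),
      Def n B -> Def m C -> B !=set0 -> C !=set0 ->
      (forall b, B b -> C (f b)) -> Def (n + m) (graph_on B f) ->
      (forall c, (f @` B) c -> dim n (B `&` f @^-1` [set c]) = k) ->
      dim n B = dim m (f @` B) + k
}.
Set Implicit Arguments.
Arguments Def {M} d {n} _ : rename.
Arguments dim {M} d {n} _ : rename.

Section Family.
Variables (M : Type) (S : dimStructure M) (k n : nat).
Variables (A : set (k.-tuple M)) (X : set ((k + n).-tuple M)).

Definition fam (a : k.-tuple M) : set (n.-tuple M) := [set x | X (cat_tuple a x)].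
Definition famU : set (n.-tuple M) := [set x | exists2 a, A a & fam a x].
Definition famIdx (x : n.-tuple M) : set (k.-tuple M) := [set a | A a /\ fam a x].
Definition famUr (r : nat) : set (n.-tuple M) :=
  [set x | famU x /\ dim S (famIdx x) = r].
Definition layer (r : nat) (a : k.-tuple M) : set (n.-tuple M) := fam a `&` famUr r.
End Family.

From HB Require Import structures.
From mathcomp Require Import all_boot.
From mathcomp Require Import boolp classical_sets.
Local Open Scope classical_set_scope.
Set Implicit Arguments. Unset Strict Implicit.

(* Double counting on the incidence set Z = {(a, x) : a in A, x in [X_a]_r}.
   Projecting Z onto A, every fibre is a copy of some [X_a]_r, so by A2
   dim Z = dim A + dim [X_a]_r; projecting onto U_r, the fibre over x is a copy
   of {a in A : x in X_a}, of dimension r, so dim Z = dim U_r + r.  A1 is only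
   used to see that U_r, and hence Z, is definable. *)

Lemma tnth_coord_map (M : Type) n m (s : 'I_m -> 'I_n) (x : n.-tuple M) i :
  tnth (coord_map s x) i = tnth x (s i).
Proof. exact: tnth_mktuple. Qed.

Lemma coord_map_id (M : Type) n (x : n.-tuple M) : coord_map id x = x.
Proof. by apply: eq_from_tnth => i; rewrite tnth_coord_map. Qed.

Section Split.
Variables (M : Type) (k n : nat).

Definition lpart : (k + n).-tuple M -> k.-tuple M := coord_map (@lshift k n).
Definition rpart : (k + n).-tuple M -> n.-tuple M := coord_map (@rshift k n).

Lemma lpart_cat (a : k.-tuple M) (x : n.-tuple M) : lpart (cat_tuple a x) = a.
Proof. by apply: eq_from_tnth => i; rewrite tnth_coord_map tnth_lshift. Qed.

Lemma rpart_cat (a : k.-tuple M) (x : n.-tuple M) : rpart (cat_tuple a x) = x.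
Proof. by apply: eq_from_tnth => i; rewrite tnth_coord_map tnth_rshift. Qed.

Lemma cat_lpart_rpart t : cat_tuple (lpart t) (rpart t) = t.
Proof.
apply: eq_from_tnth => i; rewrite -(splitK i); case: (split i) => j /=.
  by rewrite tnth_lshift tnth_coord_map.
by rewrite tnth_rshift tnth_coord_map.
Qed.

End Split.
Arguments lpart {M k n}.
Arguments rpart {M k n}.

Section Definable.
Variables (M : Type) (S : dimStructure M).

Lemma Def_setI n (A B : set (n.-tuple M)) : Def S A -> Def S B -> Def S (A `&` B).
Proof.
move=> hA hB; rewrite -[A `&` B]setCK setCI.
by apply/Def_setC/Def_setU; apply: Def_setC.
Qed.

Lemma Def_bigcap n (I : finType) (P : I -> set (n.-tuple M)) :
  (forall i, Def S (P i)) -> Def S [set x | forall i, P i x].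
Proof.
move=> hP; suff hs (s : seq I) : Def S [set x | forall i, i \in s -> P i x].
  rewrite (_ : [set x | _] = [set x | forall i, i \in enum I -> P i x]) //.
  by apply/funext => x; apply/propext; split => [h i _|h i]; apply: h; rewrite ?mem_enum.
elim: s => [|j s IHs].
  by rewrite (_ : [set x | _] = setT); [exact: Def_setT | apply/funext => x; apply/propext].
rewrite (_ : [set x | _] = P j `&` [set x | forall i, i \in s -> P i x]).
  exact: Def_setI.
apply/funext => x; apply/propext; split => [h|[hj hs] i].
  by split=> [|i si]; apply: h; rewrite inE ?eqxx ?si ?orbT.
by rewrite inE => /orP[/eqP->|/hs].
Qed.

Lemma Def_tnth_eq n (i j : 'I_n) : Def S [set x | tnth x i = tnth x j].
Proof.
have -> : [set x : n.-tuple M | tnth x i = tnth x j] =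
          coord_map (fun t : 'I_2 => if t == ord0 then i else j) @^-1`
          [set y | tnth y ord0 = tnth y ord_max].
  by apply/funext => x; apply/propext; rewrite /= !tnth_coord_map.
exact/Def_preim/Def_diag.
Qed.

Lemma Def_tnth_const n (i : 'I_n) c : Def S [set x | tnth x i = c].
Proof.
have -> : [set x : n.-tuple M | tnth x i = c] =
          coord_map (fun _ : 'I_1 => i) @^-1` [set y | tnth y ord0 = c].
  by apply/funext => x; apply/propext; rewrite /= tnth_coord_map.
exact/Def_preim/Def_point.
Qed.

Lemma Def_set1 n (p : n.-tuple M) : Def S [set p].
Proof.
have -> : [set p] = [set x | forall i, tnth x i = tnth p i].
  apply/funext => x; apply/propext; split => [-> //|h].
  exact: eq_from_tnth.
by apply: Def_bigcap => i; apply: Def_tnth_const.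
Qed.

Lemma Def_coord_map_eq n m (f g : 'I_m -> 'I_n) :
  Def S [set x | coord_map f x = coord_map g x].
Proof.
have -> : [set x : n.-tuple M | coord_map f x = coord_map g x] =
          [set x | forall i, tnth x (f i) = tnth x (g i)].
  apply/funext => x; apply/propext; split => [h i|h].
    by rewrite -!tnth_coord_map h.
  by apply: eq_from_tnth => i; rewrite !tnth_coord_map.
by apply: Def_bigcap => i; apply: Def_tnth_eq.
Qed.

Lemma Def_graph_coord_map n m (s : 'I_m -> 'I_n) (B : set (n.-tuple M)) :
  Def S B -> Def S (graph_on B (coord_map s)).
Proof.
move=> hB; have -> : graph_on B (coord_map s) =
  lpart @^-1` B `&` [set t | coord_map (@rshift n m) t =
                             coord_map (fun i => lshift m (s i)) t].
  apply/funext => t; apply/propext; split => [[b Bb ->]|[/= Bt ht]].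
    split; first by rewrite /= lpart_cat.
    rewrite /=; apply: eq_from_tnth => i; rewrite !tnth_coord_map.
    by rewrite (tnth_rshift b (coord_map s b)) (tnth_lshift b) tnth_coord_map.
  exists (lpart t) => //; rewrite -[LHS]cat_lpart_rpart; congr cat_tuple.
  by apply: eq_from_tnth => i; rewrite -[rpart t]/(coord_map _ t) ht !tnth_coord_map.
by apply: Def_setI; [exact: Def_preim | exact: Def_coord_map_eq].
Qed.

End Definable.

Section Dimension.
Variables (M : Type) (S : dimStructure M).

Lemma dim_coord_projection N m (s : 'I_m -> 'I_N) (B : set (N.-tuple M)) e :
  Def S B -> B !=set0 ->
  (forall c, (coord_map s @` B) c -> dim S (B `&` coord_map s @^-1` [set c]) = e) ->
  dim S B = (dim S (coord_map s @` B) + e)%N.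
Proof.
move=> hB [b Bb]; apply: (@dim_A2 _ S _ _ B (coord_map s @` B)) => //.
- exact: Def_image.
- by exists b.
- by exists (coord_map s b), b.
- exact: Def_graph_coord_map.
Qed.

Lemma Def_dim_fiber_eq N m (s : 'I_m -> 'I_N) (B : set (N.-tuple M)) e :
  Def S B -> B !=set0 ->
  Def S [set c | (coord_map s @` B) c /\ dim S (B `&` coord_map s @^-1` [set c]) = e].
Proof.
move=> hB [b Bb].
have := @dim_A1 _ S _ _ B (coord_map s @` B) (coord_map s) e hB (@Def_image _ S _ _ s _ hB).
have -> : [set c | (coord_map s @` B) c /\ (coord_map s @` B) c /\
                   dim S (B `&` coord_map s @^-1` [set c]) = e] =
          [set c | (coord_map s @` B) c /\ dim S (B `&` coord_map s @^-1` [set c]) = e].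
  by apply/funext => c; apply/propext; split => [[_ []]|[]].
apply.
- by exists b.
- by exists (coord_map s b), b.
- by move=> b' Bb'; exists b'.
- exact: Def_graph_coord_map.
Qed.

Lemma dim_set1 n (p : n.-tuple M) : dim S [set p] = 0%N.
Proof.
have im_p : coord_map id @` [set p] = [set p].
  by apply/funext => x; apply/propext; split => [[_ -> <-]|->]; [|exists p];
    rewrite ?coord_map_id.
have fiber_p c : [set p] c -> [set p] `&` coord_map id @^-1` [set c] = [set p].
  move=> /= ->; apply/funext => x; apply/propext.
  by split => [[]//|->]; split; rewrite //= coord_map_id.
have h : dim S [set p] = (dim S [set p] + dim S [set p])%N.
  rewrite -{2}im_p; apply: dim_coord_projection; first exact: Def_set1.
    by exists p.
  by rewrite im_p => c /fiber_p ->.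
by move/eqP: h; rewrite -{1}[dim S _]addn0 eqn_add2l => /eqP <-.
Qed.

Lemma dim_coord_map_inj N m (s : 'I_m -> 'I_N) (B : set (N.-tuple M)) :
  Def S B -> B !=set0 ->
  (forall b b', B b -> B b' -> coord_map s b = coord_map s b' -> b = b') ->
  dim S B = dim S (coord_map s @` B).
Proof.
move=> hB B0 s_inj; rewrite -[RHS]addn0; apply: dim_coord_projection => // _ [b Bb <-].
have -> : B `&` coord_map s @^-1` [set coord_map s b] = [set b].
  apply/funext => x; apply/propext.
  by split => [[Bx /s_inj]|->]; [exact | split].
exact: dim_set1.
Qed.

End Dimension.

Section Sections.
Variables (M : Type) (S : dimStructure M) (k n : nat).
Variable Z : set ((k + n).-tuple M).
Hypothesis hZ : Def S Z.

Lemma rpart_fiber_lpart a :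
  rpart @` (Z `&` lpart @^-1` [set a]) = [set x | Z (cat_tuple a x)].
Proof.
apply/funext => x; apply/propext; split => [[t [Zt /= <-] <-]|/= Zx].
  by rewrite cat_lpart_rpart.
by exists (cat_tuple a x); rewrite ?rpart_cat //= lpart_cat.
Qed.

Lemma lpart_fiber_rpart x :
  lpart @` (Z `&` rpart @^-1` [set x]) = [set a | Z (cat_tuple a x)].
Proof.
apply/funext => a; apply/propext; split => [[t [Zt /= <-] <-]|/= Za].
  by rewrite cat_lpart_rpart.
by exists (cat_tuple a x); rewrite ?lpart_cat //= rpart_cat.
Qed.

Lemma Def_fiber_lpart a : Def S (Z `&` lpart @^-1` [set a]).
Proof. by apply: Def_setI => //; apply/Def_preim/Def_set1. Qed.

Lemma Def_fiber_rpart x : Def S (Z `&` rpart @^-1` [set x]).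
Proof. by apply: Def_setI => //; apply/Def_preim/Def_set1. Qed.

Lemma dim_fiber_lpart a : [set x | Z (cat_tuple a x)] !=set0 ->
  dim S (Z `&` lpart @^-1` [set a]) = dim S [set x | Z (cat_tuple a x)].
Proof.
move=> [x Zx]; rewrite -rpart_fiber_lpart; apply: dim_coord_map_inj.
- exact: Def_fiber_lpart.
- by exists (cat_tuple a x); rewrite /= lpart_cat.
- move=> t t' [_ /= lt] [_ /= lt'] rt.
  by rewrite -(cat_lpart_rpart t) -(cat_lpart_rpart t') lt lt'; congr cat_tuple.
Qed.

Lemma dim_fiber_rpart x : [set a | Z (cat_tuple a x)] !=set0 ->
  dim S (Z `&` rpart @^-1` [set x]) = dim S [set a | Z (cat_tuple a x)].
Proof.
move=> [a Za]; rewrite -lpart_fiber_rpart; apply: dim_coord_map_inj.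
- exact: Def_fiber_rpart.
- by exists (cat_tuple a x); rewrite /= rpart_cat.
- move=> t t' [_ /= rt] [_ /= rt'] lt.
  by rewrite -(cat_lpart_rpart t) -(cat_lpart_rpart t') rt rt'; congr cat_tuple.
Qed.

Lemma sectionL_nonempty a : (lpart @` Z) a -> [set x | Z (cat_tuple a x)] !=set0.
Proof. by move=> [t Zt <-]; exists (rpart t); rewrite /= cat_lpart_rpart. Qed.

Lemma sectionR_nonempty x : (rpart @` Z) x -> [set a | Z (cat_tuple a x)] !=set0.
Proof. by move=> [t Zt <-]; exists (lpart t); rewrite /= cat_lpart_rpart. Qed.

Lemma Def_dim_sectionR_eq e : Z !=set0 ->
  Def S [set x | (rpart @` Z) x /\ dim S [set a | Z (cat_tuple a x)] = e].
Proof.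
move=> Z0; have := Def_dim_fiber_eq (@rshift k n) e hZ Z0; rewrite -/rpart.
congr (Def S _); apply/funext => x; apply/propext.
by split=> -[Zx <-] /=; split; rewrite // dim_fiber_rpart //; exact: sectionR_nonempty.
Qed.

Lemma dim_double_count e r : Z !=set0 ->
  (forall a, (lpart @` Z) a -> dim S [set x | Z (cat_tuple a x)] = e) ->
  (forall x, (rpart @` Z) x -> dim S [set a | Z (cat_tuple a x)] = r) ->
  (dim S (rpart @` Z) + r = dim S (lpart @` Z) + e)%N.
Proof.
move=> Z0 dimL dimR.
rewrite -(dim_coord_projection (s := @rshift k n)) // => [|x Zx].
  rewrite -(dim_coord_projection (s := @lshift k n)) // => a Za.
  by rewrite dim_fiber_lpart ?dimL //; exact: sectionL_nonempty.
by rewrite dim_fiber_rpart ?dimR //; exact: sectionR_nonempty.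
Qed.

End Sections.

Section Incidence.
Variables (M : Type) (S : dimStructure M) (k n : nat).
Variables (A : set (k.-tuple M)) (X : set ((k + n).-tuple M)).
Hypotheses (hA : Def S A) (hX : Def S X).

Definition incidence : set ((k + n).-tuple M) := [set t | A (lpart t) /\ X t].

Lemma Def_incidence : Def S incidence.
Proof. by apply: Def_setI => //; apply: Def_preim. Qed.

Lemma incidence_cat a x : incidence (cat_tuple a x) = (A a /\ fam X a x).
Proof. by rewrite /incidence /= lpart_cat. Qed.

Lemma sectionR_incidence x : [set a | incidence (cat_tuple a x)] = famIdx A X x.
Proof. by apply/funext => a; rewrite /= incidence_cat. Qed.

Lemma rpart_incidence : rpart @` incidence = famU A X.
Proof.
apply/funext => x; apply/propext; split => [[t [At Xt] <-]|[a Aa Xax]].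
  by exists (lpart t); rewrite // /fam /= cat_lpart_rpart.
by exists (cat_tuple a x); rewrite ?rpart_cat // incidence_cat.
Qed.

Lemma Def_famUr r : Def S (famUr S A X r).
Proof.
have [[t It]|I0] := pselect (incidence !=set0); last first.
  have -> : famUr S A X r = set0.
    apply/funext => x; apply/propext; split => // -[[a Aa Xax] _].
    by apply: I0; exists (cat_tuple a x); rewrite incidence_cat.
  by rewrite -setCT; apply/Def_setC/Def_setT.
have := Def_dim_sectionR_eq Def_incidence r (ex_intro _ t It).
congr (Def S _); rewrite rpart_incidence; apply/funext => x /=.
by rewrite sectionR_incidence.
Qed.

Definition layer_incidence r : set ((k + n).-tuple M) :=
  incidence `&` rpart @^-1` famUr S A X r.

Lemma Def_layer_incidence r : Def S (layer_incidence r).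
Proof. by apply: Def_setI; [exact: Def_incidence | apply/Def_preim/Def_famUr]. Qed.

Lemma layer_incidence_cat r a x :
  layer_incidence r (cat_tuple a x) = (A a /\ layer S A X r a x).
Proof.
rewrite /layer_incidence /= rpart_cat incidence_cat.
by apply/propext; split => [[[]]|[? []]].
Qed.

Lemma sectionL_layer_incidence r a : A a ->
  [set x | layer_incidence r (cat_tuple a x)] = layer S A X r a.
Proof.
move=> Aa; apply/funext => x /=; rewrite layer_incidence_cat.
by apply/propext; split => [[]|].
Qed.

Lemma sectionR_layer_incidence r x : famUr S A X r x ->
  [set a | layer_incidence r (cat_tuple a x)] = famIdx A X x.
Proof.
move=> Urx; apply/funext => a /=; rewrite layer_incidence_cat.
by apply/propext; split => [[? []]|[]].
Qed.

Lemma lpart_layer_incidence r : (forall a, A a -> layer S A X r a !=set0) ->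
  lpart @` layer_incidence r = A.
Proof.
move=> layer0; apply/funext => a; apply/propext; split => [[t [[At _] _] <-] //|Aa].
have [x ax] := layer0 a Aa.
by exists (cat_tuple a x); rewrite ?lpart_cat // layer_incidence_cat.
Qed.

Lemma rpart_layer_incidence r : rpart @` layer_incidence r = famUr S A X r.
Proof.
apply/funext => x; apply/propext; split => [[t [_ Urt] <-] //|Urx].
have [[a Aa Xax] _] := Urx.
by exists (cat_tuple a x); rewrite ?rpart_cat // layer_incidence_cat.
Qed.

End Incidence.

Theorem proposition3p2 (M : Type) (S : dimStructure M) (k n : nat)
  (A : set (k.-tuple M)) (X : set ((k + n).-tuple M)) (r : nat) :
  Def S A -> Def S X -> A !=set0 ->
  (forall a a', A a -> A a' -> (fam X a = fam X a' <-> a = a')) ->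
  (r <= dim S A)%N ->
  (forall a, A a -> layer S A X r a !=set0) ->
  (forall a a', A a -> A a' -> dim S (layer S A X r a) = dim S (layer S A X r a')) ->
  forall a, A a ->
    (dim S (famUr S A X r) + r = dim S A + dim S (layer S A X r a))%N.
Proof.
move=> hA hX _ _ _ layer0 layer_dim a Aa.
have -> : dim S A = dim S (lpart @` layer_incidence S A X r).
  by rewrite lpart_layer_incidence.
rewrite -rpart_layer_incidence.
apply: dim_double_count; first exact: Def_layer_incidence.
- have [x ax] := layer0 a Aa.
  by exists (cat_tuple a x); rewrite layer_incidence_cat.
- move=> a'; rewrite lpart_layer_incidence // => Aa'.
  by rewrite sectionL_layer_incidence // (layer_dim a' a).
- move=> x; rewrite rpart_layer_incidence => Urx.
  by rewrite sectionR_layer_incidence //; case: Urx.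
Qed.
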